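(* There is a constant $c>0$ such that the following holds for every $k\ge1$. Let $G$ be the graph obtained from a complete binary tree of depth $k$ (root $x$, $2^k$ leaves) by adding the edges of an arbitrary $3$-regular graph on the vertex set of the $2^k$ leaves. Consider simple random walk on $G$, with stationary measure $\pi(v)=\deg(v)/\sum_w\deg(w)$, and let $S$ consist of the $2^k$ leaves together with the root $x$. Then $$h_S(x)\ge \frac{ck}{|S|}.$$
   Context: For simple random walk $(X_t)$ on $G$ and $A\subset G$, $T_A=\inf\{t\ge0:X_t\in A\}$. The harmonic measure on $S$ from $y$ is $h_{y,S}(z)=\Pr_y[X_{T_S}=z]$ and the harmonic measure from stationarity is $h_S(z)=\sum_y\pi(y)h_{y,S}(z)$. *)

From Stdlib Require Import Reals Arith List Bool.
Import ListNotations.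
Open Scope R_scope.

(* Vertices of the complete binary tree of depth k, heap-indexed:
   1, ..., 2^(k+1)-1; root = 1; children of u are 2u and 2u+1;
   leaves are 2^k, ..., 2^(k+1)-1. *)
Definition verts (k : nat) : list nat := seq 1 (2 ^ (k + 1) - 1).

Definition in_range (k v : nat) : bool :=
  (1 <=? v)%nat && (v <? 2 ^ (k + 1))%nat.

Definition is_leaf (k v : nat) : bool :=
  (2 ^ k <=? v)%nat && (v <? 2 ^ (k + 1))%nat.

Definition root : nat := 1%nat.

Definition tree_adj (k u v : nat) : bool :=
  in_range k u && in_range k v &&
  ((v =? 2 * u)%nat || (v =? 2 * u + 1)%nat || (u =? 2 * v)%nat || (u =? 2 * v + 1)%nat).

Definition three_regular_on_leaves (k : nat) (E : nat -> nat -> bool) : Prop :=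
  (forall u v, E u v = E v u) /\
  (forall u, E u u = false) /\
  (forall u v, E u v = true -> is_leaf k u = true /\ is_leaf k v = true) /\
  (forall u, is_leaf k u = true -> length (filter (E u) (verts k)) = 3%nat).

Definition adj (k : nat) (E : nat -> nat -> bool) (u v : nat) : bool :=
  tree_adj k u v || E u v.

Definition deg (k : nat) (E : nat -> nat -> bool) (u : nat) : nat :=
  length (filter (adj k E u) (verts k)).

Definition sumR (l : list nat) (f : nat -> R) : R :=
  fold_right (fun v acc => f v + acc) 0 l.

Definition inS (k v : nat) : bool := (v =? root)%nat || is_leaf k v.

Definition cardS (k : nat) : nat := (2 ^ k + 1)%nat.

(* hitN k E n y z = Pr_y[ T_S <= n and X_{T_S} = z ] for simple random walk
   on G (first-step recursion; T_S = inf {t >= 0 : X_t in S}). *)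
Fixpoint hitN (k : nat) (E : nat -> nat -> bool) (n : nat) (y z : nat) : R :=
  if inS k y then (if (y =? z)%nat then 1 else 0)
  else match n with
       | O => 0
       | S m => / INR (deg k E y) *
                sumR (verts k) (fun w => if adj k E y w then hitN k E m w z else 0)
       end.

Definition pi_stat (k : nat) (E : nat -> nat -> bool) (v : nat) : R :=
  INR (deg k E v) / sumR (verts k) (fun w => INR (deg k E w)).

(* Pr_pi [ T_S <= n and X_{T_S} = z ]; h_S(z) is its limit as n -> oo. *)
Definition hS_N (k : nat) (E : nat -> nat -> bool) (n z : nat) : R :=
  sumR (verts k) (fun y => pi_stat k E y * hitN k E n y z).

(* Write D for the sum of all degrees.  A vertex y at depth j (2^j <= y <
   2^(j+1)) with 0 < j < k has degree 3, so pi(y) = 3/D, and the walk started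
   at y moves up with probability 1/3 and down with probability 2/3 until it
   hits S = {root} u leaves.  By symmetry the probability of entering S at the
   root depends only on the depth, and equals the absorption probability
   L(j) at 0 of the birth-death chain on {0,...,k} with these transition
   probabilities.  Its increments halve at every step, which gives
   L(j) >= 2^-(j+1).  Depth j contains 2^j vertices, so it contributes at
   least 2^j * 3/D * 2^-(j+2) = 3/(4D) to h_S(root); summing over the k-1
   internal depths and using D <= 12 * 2^k yields h_S(root) >= k/(16 |S|). *)

From Stdlib Require Import Reals Arith List Lia Lra Bool.
Open Scope R_scope.

Lemma sumR_app l1 l2 f : sumR (l1 ++ l2) f = sumR l1 f + sumR l2 f.
Proof. induction l1 as [|a l IH]; simpl; [lra | rewrite IH; lra]. Qed.

Lemma sumR_ext l f g : (forall x, In x l -> f x = g x) -> sumR l f = sumR l g.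
Proof.
  induction l as [|a l IH]; simpl; intros H; [reflexivity|].
  rewrite H, IH; auto.
Qed.

Lemma sumR_le l f g : (forall x, In x l -> f x <= g x) -> sumR l f <= sumR l g.
Proof.
  induction l as [|a l IH]; simpl; intros H; [lra|].
  pose proof (H a (or_introl eq_refl)).
  pose proof (IH (fun x h => H x (or_intror h))). lra.
Qed.

Lemma sumR_plus l f g : sumR l (fun x => f x + g x) = sumR l f + sumR l g.
Proof. induction l as [|a l IH]; simpl; [lra | rewrite IH; lra]. Qed.

Lemma sumR_const l c : sumR l (fun _ => c) = INR (length l) * c.
Proof.
  induction l as [|a l IH]; [simpl; lra|].
  change (length (a :: l)) with (S (length l)). rewrite S_INR. simpl. rewrite IH. lra.
Qed.

Lemma sumR_const_ge l f c : (forall x, In x l -> c <= f x) -> INR (length l) * c <= sumR l f.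
Proof. intros H. rewrite <- sumR_const. apply sumR_le, H. Qed.

Lemma sumR_nonneg l f : (forall x, In x l -> 0 <= f x) -> 0 <= sumR l f.
Proof.
  intros H. apply Rle_trans with (INR (length l) * 0); [lra|]. apply sumR_const_ge, H.
Qed.

Lemma sumR_point_seq s len a X :
  sumR (seq s len) (fun w => if (w =? a)%nat then X else 0) =
  if ((s <=? a) && (a <? s + len))%nat then X else 0.
Proof.
  revert s; induction len as [|len IH]; intros s; simpl.
  - destruct (Nat.leb_spec s a), (Nat.ltb_spec a (s + 0)); simpl; try lra; lia.
  - rewrite IH.
    destruct (Nat.eqb_spec s a), (Nat.leb_spec (S s) a), (Nat.ltb_spec a (S s + len)),
      (Nat.leb_spec s a), (Nat.ltb_spec a (s + S len)); simpl; try lra; lia.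
Qed.

Lemma length_filter_INR (p : nat -> bool) l :
  INR (length (filter p l)) = sumR l (fun w => if p w then 1 else 0).
Proof.
  induction l as [|a l IH]; simpl; [reflexivity|]. destruct (p a); [|simpl; lra].
  change (length (a :: filter p l)) with (S (length (filter p l))). rewrite S_INR, IH. lra.
Qed.

Lemma pow2S j : (2 ^ (j + 1) = 2 * 2 ^ j)%nat.
Proof. rewrite Nat.add_1_r. simpl. lia. Qed.

Lemma pow2_pos j : (1 <= 2 ^ j)%nat.
Proof. pose proof (Nat.pow_le_mono_r 2 0 j ltac:(lia) ltac:(lia)). simpl in H. exact H. Qed.

Lemma pow2_le i j : (i <= j)%nat -> (2 ^ i <= 2 ^ j)%nat.
Proof. intros H. apply Nat.pow_le_mono_r; lia. Qed.

Lemma in_verts k w : In w (verts k) <-> (1 <= w < 2 ^ (k + 1))%nat.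
Proof. unfold verts. rewrite in_seq. pose proof (pow2_pos (k + 1)). lia. Qed.

Lemma in_range_spec k a : in_range k a = true <-> (1 <= a < 2 ^ (k + 1))%nat.
Proof. unfold in_range. rewrite andb_true_iff, Nat.leb_le, Nat.ltb_lt. lia. Qed.

Lemma sumR_point_verts k a X :
  sumR (verts k) (fun w => if (w =? a)%nat then X else 0) = if in_range k a then X else 0.
Proof.
  unfold verts. rewrite sumR_point_seq. pose proof (pow2_pos (k + 1)).
  replace (1 + (2 ^ (k + 1) - 1))%nat with (2 ^ (k + 1))%nat by lia. reflexivity.
Qed.

Lemma sumR_point_verts_in k a X : (1 <= a < 2 ^ (k + 1))%nat ->
  sumR (verts k) (fun w => if (w =? a)%nat then X else 0) = X.
Proof. intros H. rewrite sumR_point_verts. apply in_range_spec in H. now rewrite H. Qed.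

Lemma adj_internal k E y w : three_regular_on_leaves k E ->
  (1 <= y < 2 ^ k)%nat -> (1 <= w)%nat ->
  adj k E y w = ((w =? y / 2) || (w =? 2 * y) || (w =? 2 * y + 1))%nat.
Proof.
  intros [_ [_ [HE _]]] Hy Hw.
  pose proof (Nat.div_mod y 2 ltac:(lia)). pose proof (Nat.mod_upper_bound y 2 ltac:(lia)).
  pose proof (pow2S k).
  unfold adj. destruct (E y w) eqn:He.
  { destruct (HE _ _ He) as [Hl _]. unfold is_leaf in Hl.
    apply andb_true_iff in Hl as [Hl _]. apply Nat.leb_le in Hl. lia. }
  rewrite orb_false_r. apply Bool.eq_iff_eq_true. unfold tree_adj, in_range.
  repeat rewrite ?orb_true_iff, ?andb_true_iff, ?Nat.eqb_eq, ?Nat.leb_le, ?Nat.ltb_lt.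
  split; intros; lia.
Qed.

Lemma sum_adj_internal k E y F : three_regular_on_leaves k E -> (1 <= y < 2 ^ k)%nat ->
  sumR (verts k) (fun w => if adj k E y w then F w else 0) =
  (if (2 <=? y)%nat then F (y / 2)%nat else 0) + F (2 * y)%nat + F (2 * y + 1)%nat.
Proof.
  intros HT Hy.
  pose proof (Nat.div_mod y 2 ltac:(lia)). pose proof (Nat.mod_upper_bound y 2 ltac:(lia)).
  pose proof (pow2S k).
  transitivity (sumR (verts k) (fun w => if (w =? y / 2)%nat then F (y / 2)%nat else 0) +
                sumR (verts k) (fun w => if (w =? 2 * y)%nat then F (2 * y)%nat else 0) +
                sumR (verts k) (fun w => if (w =? 2 * y + 1)%nat then F (2 * y + 1)%nat else 0)).
  - rewrite <- !sumR_plus. apply sumR_ext. intros w Hw. apply in_verts in Hw.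
    rewrite adj_internal by (auto; lia).
    destruct (Nat.eqb_spec w (y / 2)), (Nat.eqb_spec w (2 * y)), (Nat.eqb_spec w (2 * y + 1));
      subst; simpl; try lra; lia.
  - rewrite sumR_point_verts, !sumR_point_verts_in by lia.
    destruct (Nat.leb_spec 2 y).
    + replace (in_range k (y / 2)) with true by (symmetry; apply in_range_spec; lia). reflexivity.
    + replace (in_range k (y / 2)) with false; [reflexivity|].
      symmetry. apply not_true_iff_false. rewrite in_range_spec. lia.
Qed.

Lemma deg_as_sum k E y : INR (deg k E y) = sumR (verts k) (fun w => if adj k E y w then 1 else 0).
Proof. apply length_filter_INR. Qed.

Lemma deg_internal k E y : three_regular_on_leaves k E -> (2 <= y < 2 ^ k)%nat -> deg k E y = 3%nat.
Proof.
  intros HT Hy. apply INR_eq. rewrite deg_as_sum, (sum_adj_internal k E y (fun _ => 1)) by (auto; lia).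
  destruct (Nat.leb_spec 2 y); [simpl; lra | lia].
Qed.

Lemma deg_root k E : three_regular_on_leaves k E -> (1 <= k)%nat -> deg k E root = 2%nat.
Proof.
  intros HT Hk. pose proof (pow2_le 1 k Hk).
  apply INR_eq. unfold root. rewrite deg_as_sum, (sum_adj_internal k E 1 (fun _ => 1)) by (auto; simpl in *; lia).
  simpl. lra.
Qed.

Lemma length_filter_mono (p q : nat -> bool) l :
  (forall w, p w = true -> q w = true) -> (length (filter p l) <= length (filter q l))%nat.
Proof.
  intros H. induction l as [|a l IH]; simpl; [lia|].
  destruct (p a) eqn:Hp; [rewrite (H a Hp); simpl; lia | destruct (q a); simpl; lia].
Qed.

Lemma length_filter_orb (p q : nat -> bool) l :
  (length (filter (fun x => p x || q x) l) <= length (filter p l) + length (filter q l))%nat.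
Proof. induction l as [|a l IH]; simpl; [lia|]. destruct (p a), (q a); simpl; lia. Qed.

Lemma tree_deg_le3 k u : (length (filter (tree_adj k u) (verts k)) <= 3)%nat.
Proof.
  set (near := fun w => ((w =? 2 * u) || (w =? 2 * u + 1) || (w =? u / 2))%nat).
  apply Nat.le_trans with (length (filter near (verts k))).
  - apply length_filter_mono. intros w Ht. unfold tree_adj in Ht. unfold near.
    pose proof (Nat.div_mod u 2 ltac:(lia)). pose proof (Nat.mod_upper_bound u 2 ltac:(lia)).
    repeat rewrite ?orb_true_iff, ?andb_true_iff, ?Nat.eqb_eq in *.
    destruct Ht as [_ Ht]. set (q := (u / 2)%nat) in *. lia.
  - apply INR_le. rewrite length_filter_INR.
    apply Rle_trans with (sumR (verts k) (fun w =>
      (if (w =? 2 * u)%nat then 1 else 0) + (if (w =? 2 * u + 1)%nat then 1 else 0) +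
      (if (w =? u / 2)%nat then 1 else 0))).
    + apply sumR_le. intros w _. unfold near.
      destruct (w =? 2 * u)%nat, (w =? 2 * u + 1)%nat, (w =? u / 2)%nat; simpl; lra.
    + rewrite !sumR_plus, !sumR_point_verts. simpl INR.
      destruct (in_range k (2 * u)), (in_range k (2 * u + 1)), (in_range k (u / 2)); lra.
Qed.

Lemma deg_le6 k E u : three_regular_on_leaves k E -> (deg k E u <= 6)%nat.
Proof.
  intros [_ [_ [HE H3]]]. unfold deg, adj.
  eapply Nat.le_trans; [apply length_filter_orb|].
  assert (Hextra : (length (filter (E u) (verts k)) <= 3)%nat).
  { destruct (is_leaf k u) eqn:Hl; [rewrite H3; auto|].
    apply Nat.le_trans with (length (filter (fun _ => false) (verts k))).
    - apply length_filter_mono. intros w He. destruct (HE _ _ He). congruence.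
    - clear. induction (verts k); simpl; lia. }
  pose proof (tree_deg_le3 k u). lia.
Qed.

Lemma hitN_S k E m y z : hitN k E (S m) y z =
  if inS k y then (if (y =? z)%nat then 1 else 0)
  else / INR (deg k E y) * sumR (verts k) (fun w => if adj k E y w then hitN k E m w z else 0).
Proof. reflexivity. Qed.

(* The transition weight 1/deg is nonnegative (Rinv 0 = 0 covers deg = 0). *)
Lemma inv_deg_nonneg k E y : 0 <= / INR (deg k E y).
Proof.
  destruct (deg k E y) as [|d]; [simpl; rewrite Rinv_0; lra|].
  left. apply Rinv_0_lt_compat, lt_0_INR. lia.
Qed.

Lemma neighbour_average_bounds k E y (x : nat -> R) : (forall w, 0 <= x w <= 1) ->
  0 <= / INR (deg k E y) * sumR (verts k) (fun w => if adj k E y w then x w else 0) <= 1.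
Proof.
  intros Hx.
  assert (H0 : 0 <= sumR (verts k) (fun w => if adj k E y w then x w else 0)).
  { apply sumR_nonneg. intros w _. destruct (adj k E y w); [apply Hx | lra]. }
  assert (H1 : sumR (verts k) (fun w => if adj k E y w then x w else 0) <= INR (deg k E y)).
  { rewrite deg_as_sum. apply sumR_le. intros w _. destruct (adj k E y w); [apply Hx | lra]. }
  pose proof (inv_deg_nonneg k E y).
  destruct (deg k E y) as [|d] eqn:Hd.
  - simpl. rewrite Rinv_0. lra.
  - assert (0 < INR (S d)) by (apply lt_0_INR; lia).
    split; [nra|].
    apply Rmult_le_reg_l with (INR (S d)); [lra|]. rewrite <- Rmult_assoc, Rinv_r; lra.
Qed.

Lemma hitN_bounds k E n y z : 0 <= hitN k E n y z <= 1.
Proof.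
  revert y; induction n as [|n IH]; intros y.
  - simpl. destruct (inS k y); [destruct (y =? z)%nat|]; lra.
  - rewrite hitN_S. destruct (inS k y); [destruct (y =? z)%nat; lra|].
    apply neighbour_average_bounds. intros w. apply IH.
Qed.

Lemma hitN_mono k E n y z : hitN k E n y z <= hitN k E (S n) y z.
Proof.
  revert y; induction n as [|n IH]; intros y.
  - rewrite hitN_S. simpl. destruct (inS k y); [lra|].
    apply neighbour_average_bounds. intros w. apply (hitN_bounds k E 0).
  - rewrite (hitN_S k E (S n)), hitN_S. destruct (inS k y); [lra|].
    apply Rmult_le_compat_l; [apply inv_deg_nonneg|].
    apply sumR_le. intros w _. destruct (adj k E y w); [apply IH | lra].
Qed.

(* The birth-death chain on the depths 0..k: levelHit k n j is the probability
   that the chain started at depth j, moving up with probability 1/3 and down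
   with probability 2/3, is absorbed at depth 0 within n steps (depths 0 and
   k are absorbing). *)
Fixpoint levelHit (k n j : nat) : R :=
  if (j =? 0)%nat then 1 else if (k <=? j)%nat then 0 else
  match n with O => 0 | S m => (levelHit k m (j - 1) + 2 * levelHit k m (j + 1)) / 3 end.

Lemma levelHit_S k m j : levelHit k (S m) j =
  if (j =? 0)%nat then 1 else if (k <=? j)%nat then 0 else
  (levelHit k m (j - 1) + 2 * levelHit k m (j + 1)) / 3.
Proof. reflexivity. Qed.

Lemma levelHit_0 k j : levelHit k 0 j = if (j =? 0)%nat then 1 else 0.
Proof. simpl. destruct (j =? 0)%nat; [|destruct (k <=? j)%nat]; reflexivity. Qed.

Lemma levelHit_interior k n j : (1 <= j < k)%nat -> levelHit k n j =
  match n with O => 0 | S m => (levelHit k m (j - 1) + 2 * levelHit k m (j + 1)) / 3 end.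
Proof.
  intros Hj. destruct n; simpl; destruct (Nat.eqb_spec j 0); try lia;
    destruct (Nat.leb_spec k j); try lia; reflexivity.
Qed.

Lemma hitN_root k E n : hitN k E n root root = 1.
Proof. destruct n; reflexivity. Qed.

Lemma hitN_leaf k E n y : (1 <= k)%nat -> (2 ^ k <= y < 2 ^ (k + 1))%nat ->
  hitN k E n y root = 0.
Proof.
  intros Hk Hy. pose proof (pow2_le 1 k Hk). simpl in H.
  assert (Hl : inS k y = true).
  { unfold inS, is_leaf. apply orb_true_iff. right.
    apply andb_true_iff. rewrite Nat.leb_le, Nat.ltb_lt. lia. }
  destruct (Nat.eqb_spec y root) as [->|Hne]; unfold root in *; [lia|].
  destruct n; simpl; rewrite Hl; apply Nat.eqb_neq in Hne; rewrite Hne; reflexivity.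
Qed.

Lemma inS_internal k y : (2 <= y < 2 ^ k)%nat -> inS k y = false.
Proof.
  intros H. unfold inS, is_leaf, root.
  destruct (Nat.eqb_spec y 1); [lia|]. destruct (Nat.leb_spec (2 ^ k) y); [lia|]. reflexivity.
Qed.

Lemma hitN_internal k E n y z : three_regular_on_leaves k E -> (2 <= y < 2 ^ k)%nat ->
  hitN k E n y z = match n with
  | O => 0
  | S m => (hitN k E m (y / 2) z + hitN k E m (2 * y) z + hitN k E m (2 * y + 1) z) / 3
  end.
Proof.
  intros HT Hy. destruct n as [|m]; [simpl; now rewrite inS_internal|].
  rewrite hitN_S, inS_internal, deg_internal, sum_adj_internal by (auto; lia).
  destruct (Nat.leb_spec 2 y); [|lia]. simpl INR. field.
Qed.

Lemma level_parent j y : (1 <= j)%nat -> (2 ^ j <= y < 2 ^ (j + 1))%nat ->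
  (2 ^ (j - 1) <= y / 2 < 2 ^ (j - 1 + 1))%nat.
Proof.
  intros Hj Hy. replace (j - 1 + 1)%nat with j by lia.
  pose proof (pow2S (j - 1)) as P. replace (j - 1 + 1)%nat with j in P by lia.
  pose proof (pow2S j). pose proof (Nat.div_mod y 2 ltac:(lia)).
  pose proof (Nat.mod_upper_bound y 2 ltac:(lia)). lia.
Qed.

Lemma level_children j y : (2 ^ j <= y < 2 ^ (j + 1))%nat ->
  (2 ^ (j + 1) <= 2 * y /\ 2 * y + 1 < 2 ^ (j + 1 + 1))%nat.
Proof. intros Hy. pose proof (pow2S j). pose proof (pow2S (j + 1)). lia. Qed.

Lemma levelHit_root k n : levelHit k n 0 = 1.
Proof. destruct n; reflexivity. Qed.

Lemma levelHit_top k n : (1 <= k)%nat -> levelHit k n k = 0.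
Proof.
  intros Hk. destruct n; simpl; destruct (Nat.eqb_spec k 0); try lia; now rewrite Nat.leb_refl.
Qed.

Lemma hitN_level k E n : (1 <= k)%nat -> three_regular_on_leaves k E ->
  forall j y, (j <= k)%nat -> (2 ^ j <= y < 2 ^ (j + 1))%nat ->
  hitN k E n y root = levelHit k n j.
Proof.
  intros Hk HT. induction n as [|m IH]; intros j y Hj Hy.
  all: destruct (Nat.eq_dec j 0) as [->|Hj0];
    [simpl in Hy; replace y with root by (unfold root; lia);
     now rewrite hitN_root, levelHit_root|].
  all: destruct (Nat.eq_dec j k) as [->|Hjk]; [now rewrite hitN_leaf, levelHit_top|].
  all: assert (Hint : (2 <= y < 2 ^ k)%nat)
    by (pose proof (pow2_le 1 j ltac:(lia)); pose proof (pow2_le (j + 1) k ltac:(lia));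
        simpl in *; lia).
  all: rewrite hitN_internal, levelHit_interior by (auto; lia).
  - reflexivity.
  - pose proof (level_parent j y ltac:(lia) Hy). pose proof (level_children j y Hy).
    rewrite (IH (j - 1)%nat (y / 2)%nat), (IH (j + 1)%nat (2 * y)%nat),
      (IH (j + 1)%nat (2 * y + 1)%nat) by lia.
    field.
Qed.

Lemma levelHit_bounds k n j : 0 <= levelHit k n j <= 1.
Proof.
  revert j; induction n as [|n IH]; intros j.
  - rewrite levelHit_0. destruct (j =? 0)%nat; lra.
  - rewrite levelHit_S. destruct (j =? 0)%nat; [lra|]. destruct (k <=? j)%nat; [lra|].
    pose proof (IH (j - 1)%nat). pose proof (IH (j + 1)%nat). lra.
Qed.

Lemma levelHit_mono k n j : levelHit k n j <= levelHit k (S n) j.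
Proof.
  revert j; induction n as [|n IH]; intros j.
  - rewrite levelHit_0, levelHit_S. destruct (j =? 0)%nat; [lra|]. destruct (k <=? j)%nat; [lra|].
    pose proof (levelHit_bounds k 0 (j - 1)). pose proof (levelHit_bounds k 0 (j + 1)). lra.
  - rewrite (levelHit_S k (S n)), (levelHit_S k n).
    destruct (j =? 0)%nat; [lra|]. destruct (k <=? j)%nat; [lra|].
    pose proof (IH (j - 1)%nat). pose proof (IH (j + 1)%nat). lra.
Qed.

Lemma levelHit_mono_le k n m j : (n <= m)%nat -> levelHit k n j <= levelHit k m j.
Proof. induction 1; [lra|]. pose proof (levelHit_mono k m j). lra. Qed.

Lemma levelHit_cv k j : {l | Un_cv (fun n => levelHit k n j) l}.
Proof.
  apply growing_cv.
  - intros n. apply levelHit_mono.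
  - exists 1. intros x [i ->]. apply levelHit_bounds.
Defined.

Definition levelLim (k j : nat) : R := proj1_sig (levelHit_cv k j).

Lemma levelLim_cv k j : Un_cv (fun n => levelHit k n j) (levelLim k j).
Proof. unfold levelLim. destruct (levelHit_cv k j). assumption. Qed.

Lemma Un_cv_ext f g l : (forall n, f n = g n) -> Un_cv f l -> Un_cv g l.
Proof.
  intros H Hc eps He. destruct (Hc eps He) as [N HN]. exists N. intros n Hn. rewrite <- H. auto.
Qed.

Lemma Un_cv_const c : Un_cv (fun _ => c) c.
Proof. intros eps He. exists 0%nat. intros n _. unfold R_dist. rewrite Rminus_diag, Rabs_R0. lra. Qed.

Lemma levelLim_const k j c : (forall n, levelHit k n j = c) -> levelLim k j = c.
Proof.
  intros H. apply UL_sequence with (fun n => levelHit k n j); [apply levelLim_cv|].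
  apply Un_cv_ext with (fun _ => c); [intros; now rewrite H | apply Un_cv_const].
Qed.

Lemma levelLim_root k : levelLim k 0 = 1.
Proof. apply levelLim_const, levelHit_root. Qed.

Lemma levelLim_top k : (1 <= k)%nat -> levelLim k k = 0.
Proof. intros Hk. apply levelLim_const. intros n. now apply levelHit_top. Qed.

Lemma levelLim_nonneg k j : 0 <= levelLim k j.
Proof.
  apply Rle_trans with (levelHit k 0 j); [apply levelHit_bounds|].
  apply (growing_ineq (fun n => levelHit k n j)); [intros n; apply levelHit_mono | apply levelLim_cv].
Qed.

Lemma levelLim_harmonic k j : (1 <= j < k)%nat ->
  levelLim k j = (levelLim k (j - 1) + 2 * levelLim k (j + 1)) / 3.
Proof.
  intros Hj. apply UL_sequence with (fun n => levelHit k (n + 1) j).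
  - apply (CV_shift' (fun n => levelHit k n j) 1), levelLim_cv.
  - apply Un_cv_ext with (fun n => (levelHit k n (j - 1) + 2 * levelHit k n (j + 1)) * / 3).
    + intros n. replace (n + 1)%nat with (S n) by lia. rewrite (levelHit_interior k (S n) j) by lia. reflexivity.
    + apply CV_mult; [|apply Un_cv_const]. apply CV_plus; [apply levelLim_cv|].
      apply CV_mult with (An := fun _ => 2); [apply Un_cv_const | apply levelLim_cv].
Qed.

Lemma levelLim_increment k j : (j < k)%nat ->
  levelLim k j - levelLim k (j + 1) = (levelLim k 0 - levelLim k 1) * (1/2) ^ j.
Proof.
  induction j as [|j IH]; intros Hj; [simpl; lra|].
  specialize (IH ltac:(lia)).
  pose proof (levelLim_harmonic k (S j) ltac:(lia)) as Hh.
  replace (S j - 1)%nat with j in Hh by lia. replace (j + 1)%nat with (S j) in IH by lia.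
  change ((1/2) ^ S j) with (1/2 * (1/2) ^ j). lra.
Qed.

Lemma levelLim_telescope k m : (m <= k)%nat ->
  levelLim k 0 - levelLim k m = (levelLim k 0 - levelLim k 1) * (2 - 2 * (1/2) ^ m).
Proof.
  induction m as [|m IH]; intros Hm; [simpl; lra|].
  specialize (IH ltac:(lia)). pose proof (levelLim_increment k m ltac:(lia)) as Hinc.
  replace (m + 1)%nat with (S m) in Hinc by lia.
  change ((1/2) ^ S m) with (1/2 * (1/2) ^ m). lra.
Qed.

(* Since the total drop is 1, the first increment is at least 1/2, hence
   the increment at depth j (a lower bound for levelLim k j) is at least
   2^-(j+1). *)
Lemma levelLim_lower k j : (j < k)%nat -> (1/2) ^ (j + 1) <= levelLim k j.
Proof.
  intros Hj.
  pose proof (levelLim_telescope k k ltac:(lia)) as Htot.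
  rewrite levelLim_root, levelLim_top in Htot by lia.
  pose proof (pow_lt (1/2) k ltac:(lra)) as Hp.
  assert (Hpk : (1/2) ^ k <= 1/2).
  { replace k with (S (k - 1)) by lia. simpl.
    pose proof (pow_incr (1/2) 1 (k - 1) ltac:(lra)) as Hle. rewrite pow1 in Hle. lra. }
  assert (Hfirst : 1/2 <= 1 - levelLim k 1) by nra.
  pose proof (levelLim_increment k j Hj) as Hinc. rewrite levelLim_root in Hinc.
  pose proof (levelLim_nonneg k (j + 1)).
  rewrite pow_add. pose proof (pow_lt (1/2) j ltac:(lra)). simpl pow. nra.
Qed.

Lemma levelHit_eventually_lower k j : (j < k)%nat ->
  exists N, forall n, (N <= n)%nat -> (1/2) ^ (j + 2) <= levelHit k n j.
Proof.
  intros Hj. pose proof (levelLim_lower k j Hj).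
  assert (Hp : 0 < (1/2) ^ (j + 2)) by (apply pow_lt; lra).
  destruct (levelLim_cv k j _ Hp) as [N HN]. exists N. intros n Hn.
  specialize (HN n Hn). unfold R_dist in HN. apply Rabs_def2 in HN.
  replace (j + 2)%nat with (S (j + 1)) in * by lia. simpl pow in *. lra.
Qed.

Lemma levelHit_uniform_lower k K :
  exists N, forall j, (j < K)%nat -> (j < k)%nat -> (1/2) ^ (j + 2) <= levelHit k N j.
Proof.
  induction K as [|K [N1 H1]]; [exists 0%nat; intros; lia|].
  destruct (Nat.lt_ge_cases K k) as [HK|HK].
  - destruct (levelHit_eventually_lower k K HK) as [N2 H2].
    exists (Nat.max N1 N2). intros j Hj Hjk.
    destruct (Nat.eq_dec j K) as [->|Hne]; [apply H2; lia|].
    eapply Rle_trans; [apply H1; lia | apply levelHit_mono_le; lia].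
  - exists N1. intros j Hj Hjk. apply H1; lia.
Qed.

Definition totalDeg (k : nat) (E : nat -> nat -> bool) : R :=
  sumR (verts k) (fun w => INR (deg k E w)).

Lemma pi_stat_totalDeg k E y : pi_stat k E y = INR (deg k E y) / totalDeg k E.
Proof. reflexivity. Qed.

Lemma verts_cons k : verts k = (1 :: seq 2 (2 ^ (k + 1) - 2))%nat.
Proof.
  unfold verts. pose proof (pow2_le 1 (k + 1) ltac:(lia)). simpl in H.
  replace (2 ^ (k + 1) - 1)%nat with (S (2 ^ (k + 1) - 2)) by lia. reflexivity.
Qed.

(* The root alone contributes 2 to the total degree. *)
Lemma totalDeg_ge k E : three_regular_on_leaves k E -> (1 <= k)%nat -> 2 <= totalDeg k E.
Proof.
  intros HT Hk. unfold totalDeg. rewrite verts_cons. simpl sumR.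
  pose proof (deg_root k E HT Hk) as Hr. unfold root in Hr. rewrite Hr.
  assert (0 <= sumR (seq 2 (2 ^ (k + 1) - 2)) (fun w => INR (deg k E w)))
    by (apply sumR_nonneg; intros; apply pos_INR).
  simpl INR. lra.
Qed.

(* There are fewer than 2^(k+1) vertices, each of degree at most 6. *)
Lemma totalDeg_le k E : three_regular_on_leaves k E -> totalDeg k E <= 12 * 2 ^ k.
Proof.
  intros HT. unfold totalDeg.
  apply Rle_trans with (sumR (verts k) (fun _ => 6)).
  - apply sumR_le. intros w _. replace 6 with (INR 6) by (simpl; lra). apply le_INR, deg_le6, HT.
  - rewrite sumR_const. unfold verts. rewrite length_seq.
    assert (INR (2 ^ (k + 1) - 1) <= 2 * 2 ^ k).
    { apply Rle_trans with (INR (2 ^ (k + 1))); [apply le_INR; lia|].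
      rewrite pow_INR, pow_add, pow_1. replace (INR 2) with 2 by (simpl; lra). lra. }
    lra.
Qed.

Lemma pi_stat_nonneg k E y : three_regular_on_leaves k E -> (1 <= k)%nat -> 0 <= pi_stat k E y.
Proof.
  intros HT Hk. rewrite pi_stat_totalDeg. pose proof (totalDeg_ge k E HT Hk).
  unfold Rdiv. apply Rmult_le_pos; [apply pos_INR | left; apply Rinv_0_lt_compat; lra].
Qed.

Lemma hS_N_cv k E : three_regular_on_leaves k E -> (1 <= k)%nat ->
  exists h, Un_cv (fun n => hS_N k E n root) h /\ forall n, hS_N k E n root <= h.
Proof.
  intros HT Hk.
  assert (Hgr : Un_growing (fun n => hS_N k E n root)).
  { intros n. apply sumR_le. intros y _.
    apply Rmult_le_compat_l; [apply pi_stat_nonneg; auto | apply hitN_mono]. }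
  assert (Hub : has_ub (fun n => hS_N k E n root)).
  { exists (sumR (verts k) (fun y => pi_stat k E y)). intros x [i ->].
    apply sumR_le. intros y _. pose proof (hitN_bounds k E i y root).
    pose proof (pi_stat_nonneg k E y HT Hk). nra. }
  destruct (growing_cv _ Hgr Hub) as [h Hh].
  exists h. split; [exact Hh|]. intros n. exact (growing_ineq _ h Hgr Hh n).
Qed.

Lemma prefix_sum (F : nat -> R) c K :
  (forall j, (1 <= j <= K)%nat -> c <= sumR (seq (2 ^ j) (2 ^ j)) F) ->
  forall m, (m <= K)%nat -> F 1%nat + INR m * c <= sumR (seq 1 (2 ^ (m + 1) - 1)) F.
Proof.
  intros Hlevel. induction m as [|m IH]; intros Hm; [simpl; lra|].
  specialize (IH ltac:(lia)). pose proof (pow2_le 1 (m + 1) ltac:(lia)). simpl in H.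
  replace (2 ^ (S m + 1) - 1)%nat with ((2 ^ (m + 1) - 1) + 2 ^ (m + 1))%nat
    by (rewrite (pow2S (S m)); replace (S m) with (m + 1)%nat by lia; lia).
  rewrite seq_app, sumR_app.
  replace (1 + (2 ^ (m + 1) - 1))%nat with (2 ^ (m + 1))%nat by lia.
  pose proof (Hlevel (m + 1)%nat ltac:(lia)). rewrite S_INR. lra.
Qed.

(* An internal depth j holds 2^j vertices of stationary mass 3/D each, so it
   contributes at least 2^j * 3/D * 2^-(j+2) = 3/(4D). *)
Lemma level_mass k E N j : (1 <= k)%nat -> three_regular_on_leaves k E -> (1 <= j < k)%nat ->
  (1/2) ^ (j + 2) <= levelHit k N j ->
  3/4 * / totalDeg k E <= sumR (seq (2 ^ j) (2 ^ j)) (fun y => pi_stat k E y * hitN k E N y root).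
Proof.
  intros Hk HT Hj Hhit. pose proof (totalDeg_ge k E HT Hk).
  eapply Rle_trans; [|apply sumR_const_ge with (c := 3 * / totalDeg k E * (1/2) ^ (j + 2))].
  - rewrite length_seq, pow_INR, pow_add. replace (INR 2) with 2 by (simpl; lra).
    replace (2 ^ j * (3 * / totalDeg k E * ((1/2) ^ j * (1/2) ^ 2)))
      with ((2 * (1/2)) ^ j * (3 * / totalDeg k E * (1/2) ^ 2)) by (rewrite Rpow_mult_distr; ring).
    replace (2 * (1/2)) with 1 by lra. rewrite pow1. simpl. lra.
  - intros y Hy. apply in_seq in Hy.
    pose proof (pow2S j). pose proof (pow2_le (j + 1) k ltac:(lia)). pose proof (pow2_le 1 j ltac:(lia)).
    simpl in *.
    rewrite pi_stat_totalDeg, deg_internal, (hitN_level k E N Hk HT j y) by (auto; lia).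
    replace (INR 3) with 3 by (simpl; lra). apply Rmult_le_compat_l; [|exact Hhit].
    apply Rmult_le_pos; [lra | left; apply Rinv_0_lt_compat; lra].
Qed.

(* Some truncation already gives h_S(root) >= (2 + (3/4)(k-1)) / D: the root
   contributes 2/D and each of the depths 1..k-1 contributes 3/(4D). *)
Lemma hS_N_lower k E : (1 <= k)%nat -> three_regular_on_leaves k E ->
  exists N, (2 + 3/4 * INR (k - 1)) / totalDeg k E <= hS_N k E N root.
Proof.
  intros Hk HT. destruct (levelHit_uniform_lower k k) as [N HN]. exists N.
  pose proof (totalDeg_ge k E HT Hk). pose proof (pow2_pos k).
  set (F := fun y => pi_stat k E y * hitN k E N y root).
  assert (Hinternal : sumR (seq 1 (2 ^ k - 1)) F <= hS_N k E N root).
  { unfold hS_N, verts. fold F.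
    replace (2 ^ (k + 1) - 1)%nat with ((2 ^ k - 1) + 2 ^ k)%nat by (rewrite pow2S; lia).
    rewrite seq_app, sumR_app.
    assert (0 <= sumR (seq (1 + (2 ^ k - 1)) (2 ^ k)) F).
    { apply sumR_nonneg. intros y _. unfold F.
      pose proof (hitN_bounds k E N y root). pose proof (pi_stat_nonneg k E y HT Hk). nra. }
    lra. }
  assert (Hroot : F root = 2 * / totalDeg k E).
  { unfold F. rewrite hitN_root, pi_stat_totalDeg, deg_root by auto. simpl INR. lra. }
  pose proof (prefix_sum F (3/4 * / totalDeg k E) (k - 1)) as Hpre.
  specialize (Hpre (fun j Hj => level_mass k E N j Hk HT ltac:(lia) (HN j ltac:(lia) ltac:(lia)))).
  specialize (Hpre (k - 1)%nat ltac:(lia)). replace (k - 1 + 1)%nat with k in Hpre by lia.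
  change (F 1%nat) with (F root) in Hpre. rewrite Hroot in Hpre. unfold Rdiv. lra.
Qed.

Lemma final_estimate k D : (1 <= k)%nat -> 0 < D -> D <= 12 * 2 ^ k ->
  1/16 * INR k / INR (cardS k) <= (2 + 3/4 * INR (k - 1)) / D.
Proof.
  intros Hk HD HDle. unfold cardS.
  rewrite plus_INR, pow_INR, minus_INR by lia. replace (INR 2) with 2 by (simpl; lra).
  pose proof (le_INR 1 k Hk) as K1. simpl INR in *.
  set (X := 2 ^ k) in *. assert (HX : 0 < X) by (apply pow_lt; lra).
  apply Rle_trans with (3/4 * INR k * / (12 * X)).
  - replace (1/16 * INR k / (X + 1)) with (3/4 * INR k * / (12 * (X + 1))) by (field; lra).
    apply Rmult_le_compat_l; [lra|]. apply Rinv_le_contravar; lra.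
  - apply Rle_trans with (3/4 * INR k * / D).
    + apply Rmult_le_compat_l; [lra|]. apply Rinv_le_contravar; lra.
    + unfold Rdiv. apply Rmult_le_compat_r; [left; apply Rinv_0_lt_compat|]; lra.
Qed.

Theorem mainTheorem6 :
  exists c : R, 0 < c /\
  forall (k : nat) (E : nat -> nat -> bool),
    (1 <= k)%nat ->
    three_regular_on_leaves k E ->
    exists h : R,
      Un_cv (fun n => hS_N k E n root) h /\
      c * INR k / INR (cardS k) <= h.
Proof.
  exists (1/16). split; [lra|]. intros k E Hk HT.
  destruct (hS_N_cv k E HT Hk) as [h [Hcv Hle]]. exists h. split; [exact Hcv|].
  destruct (hS_N_lower k E Hk HT) as [N HN].
  pose proof (totalDeg_ge k E HT Hk). pose proof (totalDeg_le k E HT).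
  eapply Rle_trans; [apply final_estimate; eauto; lra|].
  eapply Rle_trans; [exact HN | apply Hle].
Qed.
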